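(* Let $(L,\le,(\sqsubseteq_\alpha)_{\alpha<\kappa})$ be a model of Axioms 1–4. Let $\alpha\le\kappa$ be an ordinal and let $(x_\beta)_{\beta<\alpha}$ be a family of elements of $L$ such that $x_\beta=_\beta x_\gamma$ and $x_\beta\le x_\gamma$ whenever $\beta<\gamma<\alpha$. Let $x=\bigvee_{\beta<\alpha}x_\beta$. Then $x_\beta=_\beta x$ for all $\beta<\alpha$.
   Context: Setting (model of Axioms 1–4). Let $(L,\le)$ be a complete lattice with join operation $\bigvee$ and least element $\perp$. Let $\kappa>0$ be an ordinal, and for each ordinal $\alpha<\kappa$ let $\sqsubseteq_\alpha$ be a preorder on $L$. Derived relation: $x=_\alpha y$ means $x\sqsubseteq_\alpha y$ and $y\sqsubseteq_\alpha x$. Derived set, for $x\in L$ and $\alpha<\kappa$: $(x]_\alpha=\{y\in L:\forall\beta<\alpha,\ x=_\beta y\}$. For a set $X$, $X\sqsubseteq_\alpha y$ means $x\sqsubseteq_\alpha y$ for all $x\in X$. The structure is a model of Axioms 1–4 if: - (A1) for all $\alpha<\beta<\kappa$, $x\sqsubseteq_\beta y$ implies $x=_\alpha y$; - (A2) $\bigcap_{\alpha<\kappa}=_\alpha$ is the identity relation on $L$; - (A3) for every $x\in L$, every $\alpha<\kappa$ and every $X\subseteq(x]_\alpha$ there is $y\in(x]_\alpha$ with $X\sqsubseteq_\alpha y$ such that for all $z\in(x]_\alpha$ with $X\sqsubseteq_\alpha z$ we have $y\sqsubseteq_\alpha z$ and $y\le z$; - (A4) for every nonempty $X\subseteq L$,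 every $\alpha<\kappa$ and every $y\in L$, if $y=_\alpha x$ for all $x\in X$ then $y=_\alpha\bigvee X$. *)

(* Ordinals < kappa are modelled by an arbitrary type I equipped
   with a strict well-order ltI (any well-ordered set is isomorphic to a unique
   ordinal kappa); kappa > 0 means I is inhabited. An ordinal alpha <= kappa is
   an element of option I: Some a is the ordinal a < kappa, None is kappa. *)
From Stdlib Require Import Relations Wellfounded.

Section Defs.
Variables (L : Type) (le : L -> L -> Prop) (sup : (L -> Prop) -> L).
Variables (I : Type) (ltI : I -> I -> Prop) (sq : I -> L -> L -> Prop).

Definition complete_lattice : Prop :=
  (forall x, le x x) /\
  (forall x y, le x y -> le y x -> x = y) /\
  (forall x y z, le x y -> le y z -> le x z) /\
  (forall X : L -> Prop, (forall x, X x -> le x (sup X)) /\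
     (forall z, (forall x, X x -> le x z) -> le (sup X) z)).

Definition ordinal_index : Prop :=
  (forall a, ~ ltI a a) /\
  (forall a b c, ltI a b -> ltI b c -> ltI a c) /\
  (forall a b, ltI a b \/ a = b \/ ltI b a) /\
  well_founded ltI /\
  inhabited I.

Definition eq_at (a : I) (x y : L) : Prop := sq a x y /\ sq a y x.

Definition seg (x : L) (a : I) (y : L) : Prop :=
  forall b, ltI b a -> eq_at b x y.

Definition Axiom1 : Prop :=
  forall a b x y, ltI a b -> sq b x y -> eq_at a x y.

Definition Axiom2 : Prop :=
  forall x y, (forall a, eq_at a x y) <-> x = y.

Definition Axiom3 : Prop :=
  forall (x : L) (a : I) (X : L -> Prop),
    (forall z, X z -> seg x a z) ->
    exists y, seg x a y /\ (forall w, X w -> sq a w y) /\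
      (forall z, seg x a z -> (forall w, X w -> sq a w z) ->
         sq a y z /\ le y z).

Definition Axiom4 : Prop :=
  forall (X : L -> Prop) (a : I) (y : L),
    (exists x, X x) -> (forall x, X x -> eq_at a y x) -> eq_at a y (sup X).

Definition is_model : Prop :=
  complete_lattice /\ ordinal_index /\
  (forall a, (forall x, sq a x x) /\
             (forall x y z, sq a x y -> sq a y z -> sq a x z)) /\
  Axiom1 /\ Axiom2 /\ Axiom3 /\ Axiom4.

End Defs.

Definition below {I : Type} (ltI : I -> I -> Prop) (alpha : option I) (b : I) : Prop :=
  match alpha with None => True | Some a => ltI b a end.

(* Fix b < alpha and consider the tail T_b = { x_c : b <= c < alpha } of the
   chain.  Every element of T_b is =_b-equivalent to x_b (for c = b by
   reflexivity of the preorder, for c > b by the chain hypothesis), so Axiom 4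
   gives x_b =_b \/ T_b.  It remains to see that \/ T_b is the join x of the
   whole chain: T_b is a subfamily which is cofinal for <= (each x_c with
   c < b lies below x_b, which is in T_b), and in a complete lattice a cofinal
   subfamily has the same join. *)

Section CompleteLattice.
Variables (L : Type) (le : L -> L -> Prop) (sup : (L -> Prop) -> L).
Hypothesis Hlat : complete_lattice L le sup.

Lemma sup_cofinal (X Y : L -> Prop) :
  (forall y, Y y -> X y) ->
  (forall x, X x -> exists y, Y y /\ le x y) ->
  sup Y = sup X.
Proof.
  destruct Hlat as [_ [Hanti [Htrans Hsup]]].
  intros HYX Hcof. apply Hanti.
  - apply (proj2 (Hsup Y)). intros y Hy. apply (proj1 (Hsup X)), HYX, Hy.
  - apply (proj2 (Hsup X)). intros x Hx.
    destruct (Hcof x Hx) as [y [Hy Hxy]].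
    apply Htrans with y; [exact Hxy | apply (proj1 (Hsup Y)), Hy].
Qed.

End CompleteLattice.

Section ChainTail.
Variables (L : Type) (le : L -> L -> Prop) (sup : (L -> Prop) -> L).
Variables (I : Type) (ltI : I -> I -> Prop) (sq : I -> L -> L -> Prop).
Variables (alpha : option I) (xs : I -> L).

Definition chain_set (y : L) : Prop :=
  exists c, below ltI alpha c /\ y = xs c.

Definition chain_tail (b : I) (y : L) : Prop :=
  exists c, below ltI alpha c /\ ~ ltI c b /\ y = xs c.

Hypothesis Hord : ordinal_index I ltI.

Lemma chain_tail_head (b : I) : below ltI alpha b -> chain_tail b (xs b).
Proof.
  destruct Hord as [Hirr _].
  intros Hb. exists b. split; [exact Hb | split; [apply Hirr | reflexivity]].
Qed.

Lemma chain_tail_sub (b : I) (y : L) : chain_tail b y -> chain_set y.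
Proof. intros [c [Hc [_ ->]]]. exists c. split; [exact Hc | reflexivity]. Qed.

Lemma chain_tail_cofinal (b : I) :
  (forall x, le x x) ->
  (forall c d, ltI c d -> below ltI alpha d -> le (xs c) (xs d)) ->
  below ltI alpha b ->
  forall y, chain_set y -> exists z, chain_tail b z /\ le y z.
Proof.
  destruct Hord as [Hirr [Hlt [Htri _]]].
  intros Hrefl Hincr Hb y [c [Hc ->]].
  destruct (Htri c b) as [Hcb | [-> | Hbc]].
  - exists (xs b). split; [apply chain_tail_head, Hb | apply Hincr; assumption].
  - exists (xs b). split; [apply chain_tail_head, Hb | apply Hrefl].
  - exists (xs c). split; [| apply Hrefl].
    exists c. split; [exact Hc | split; [| reflexivity]].
    intro Hcb. apply (Hirr b). eapply Hlt; eauto.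
Qed.

Lemma chain_tail_eq_at (b : I) :
  (forall x, sq b x x) ->
  Axiom4 L sup I sq ->
  (forall c, ltI b c -> below ltI alpha c -> eq_at L I sq b (xs b) (xs c)) ->
  below ltI alpha b ->
  eq_at L I sq b (xs b) (sup (chain_tail b)).
Proof.
  destruct Hord as [_ [_ [Htri _]]].
  intros Hrefl A4 Hchain Hb. apply A4.
  - exists (xs b). apply chain_tail_head, Hb.
  - intros y [c [Hc [Hnc ->]]].
    destruct (Htri b c) as [Hbc | [<- | Hcb]].
    + apply Hchain; assumption.
    + split; apply Hrefl.
    + contradiction.
Qed.

End ChainTail.

Theorem mainTheorem9
  (L : Type) (le : L -> L -> Prop) (sup : (L -> Prop) -> L)
  (I : Type) (ltI : I -> I -> Prop) (sq : I -> L -> L -> Prop)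
  (Hmodel : is_model L le sup I ltI sq)
  (alpha : option I) (xs : I -> L)
  (Hchain : forall b c, ltI b c -> below ltI alpha c ->
     eq_at L I sq b (xs b) (xs c) /\ le (xs b) (xs c)) :
  forall b, below ltI alpha b ->
    eq_at L I sq b (xs b) (sup (fun y => exists c, below ltI alpha c /\ y = xs c)).
Proof.
  intros b Hb.
  destruct Hmodel as [Hlat [Hord [Hpre [_ [_ [_ A4]]]]]].
  assert (Hjoin : sup (chain_tail L I ltI alpha xs b) = sup (chain_set L I ltI alpha xs)).
  { apply (sup_cofinal L le sup Hlat).
    - apply chain_tail_sub.
    - apply chain_tail_cofinal; [exact Hord | apply (proj1 Hlat) | | exact Hb].
      intros c d Hcd Hd. apply (Hchain c d Hcd Hd). }
  change (eq_at L I sq b (xs b) (sup (chain_set L I ltI alpha xs))).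
  rewrite <- Hjoin.
  apply chain_tail_eq_at; [exact Hord | apply (Hpre b) | exact A4 | | exact Hb].
  intros c Hbc Hc. apply (Hchain b c Hbc Hc).
Qed.
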